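(* Let $\mathbb{H}$ be a quasiconcave classical entropy and let $\mathcal{N}$ be a classical channel from $X$ ($|X|=m$) to $Y$ with columns $\mathbf{p}_x=\mathcal{N}(\mathbf{e}_x)$. Then its maximal extension satisfies $\overline{\mathbb{H}}(Y|X)_{\mathcal{N}}=\min_{x\in[m]}\mathbb{H}(\mathbf{p}_x)$.
   Context: A classical entropy is a function $\mathbb{H}$ on $\bigcup_{n}\mathrm{Prob}(n)$ that is Schur-concave ($\mathbf{p}\succ\mathbf{q}\Rightarrow\mathbb{H}(\mathbf{p})\le\mathbb{H}(\mathbf{q})$, vectors of different lengths being compared after padding with zeros) and additive ($\mathbb{H}(\mathbf{p}\otimes\mathbf{q})=\mathbb{H}(\mathbf{p})+\mathbb{H}(\mathbf{q})$). It is quasiconcave if $\mathbb{H}(\sum_i\lambda_i\mathbf{p}_i)\ge\min_i\mathbb{H}(\mathbf{p}_i)$ for convex weights $\lambda_i$. Here $\mathbf{p}\succ\mathbf{q}$ means the sum of the $k$ largest entries of $\mathbf{p}$ is at least that of $\mathbf{q}$ for every $k$. Classical channels are column-stochastic matrices; a probability vector is a classical channel with trivial input. Classical channel majorization (same output): $\mathcal{N}\succ\mathcal{M}$ iff $\mathcal{M}=\mathcal{D}^{YZ\to Y}\circ(\mathcal{N}\otimes\mathrm{id}^Z)\circ\mathcal{S}^{X'\to XZ}$ for a finite classical system $Z$ and classical channels $\mathcal{S},\mathcal{D}$ with $\mathcal{D}(\cdot\otimes\mathbf{e}_z)$ doubly stochastic for all $z$; channels with different output sizes are compared after padding outputs of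 the smaller one with zeros. The maximal extension is $\overline{\mathbb{H}}(Y|X)_{\mathcal{N}}:=\inf\{\mathbb{H}(\mathbf{q}):\ \mathcal{N}\succ\mathbf{q}\}$, the infimum over probability vectors $\mathbf{q}$ of arbitrary finite length. *)

From HB Require Import structures.
From mathcomp Require Import all_boot all_order all_algebra.
From mathcomp Require Import mxtens.
From mathcomp Require Import boolp classical_sets reals.
Set Implicit Arguments. Unset Strict Implicit. Unset Printing Implicit Defensive.
Import Order.TTheory GRing.Theory Num.Theory.
Local Open Scope ring_scope.
Local Open Scope classical_set_scope.

Section Defs.
Variable R : realType.

(* A classical channel from 'I_b to 'I_a is a column-stochastic a x b matrix;
   column j is the output distribution on input e_j. *)
Definition is_channel {a b : nat} (A : 'M[R]_(a, b)) : Prop :=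
  (forall i j, 0 <= A i j) /\ (forall j, \sum_i A i j = 1).

(* A probability vector of length n = a channel with trivial input. *)
Definition is_prob {n : nat} (p : 'cV[R]_n) : Prop := is_channel p.

Definition doubly_stochastic {a b : nat} (A : 'M[R]_(a, b)) : Prop :=
  is_channel A /\ (forall i, \sum_j A i j = 1).

Definition pad {a b : nat} (k : nat) (A : 'M[R]_(a, b)) : 'M[R]_(k, b) :=
  \matrix_(i < k, j < b)
    (if (insub (val i) : option 'I_a) is Some i' then A i' j else 0).

Definition sum_largest {N : nat} (v : 'cV[R]_N) (j : nat) : R :=
  \big[Num.max/0]_(A : {set 'I_N} | #|A| == j) \sum_(i in A) v i 0.

Definition majorizes {n k : nat} (p : 'cV[R]_n) (q : 'cV[R]_k) : Prop :=
  forall j, (j <= maxn n k)%N ->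
    sum_largest (pad (maxn n k) q) j <= sum_largest (pad (maxn n k) p) j.

Definition chmaj_same {y x x' : nat} (N : 'M[R]_(y, x)) (M : 'M[R]_(y, x'))
  : Prop :=
  exists (nz : nat) (S : 'M[R]_(x * nz, x')) (D : 'M[R]_(y, y * nz)),
    is_channel S /\ is_channel D /\
    (forall z : 'I_nz,
        doubly_stochastic (D *m ((1%:M : 'M[R]_y) *t (delta_mx z 0 : 'cV[R]_nz)))) /\
    M = D *m (N *t (1%:M : 'M[R]_nz)) *m S.

Definition chmaj {a x b x' : nat} (N : 'M[R]_(a, x)) (M : 'M[R]_(b, x')) : Prop :=
  chmaj_same (pad (maxn a b) N) (pad (maxn a b) M).

Definition entropy_fun := forall n : nat, 'cV[R]_n -> R.

Definition schur_concave (H : entropy_fun) : Prop :=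
  forall n k (p : 'cV[R]_n) (q : 'cV[R]_k),
    is_prob p -> is_prob q -> majorizes p q -> H n p <= H k q.

Definition additive (H : entropy_fun) : Prop :=
  forall n k (p : 'cV[R]_n) (q : 'cV[R]_k),
    is_prob p -> is_prob q -> H (n * k)%N (p *t q) = H n p + H k q.

Definition classical_entropy (H : entropy_fun) : Prop :=
  schur_concave H /\ additive H.

Definition quasiconcave (H : entropy_fun) : Prop :=
  forall n r (lam : 'I_r.+1 -> R) (ps : 'I_r.+1 -> 'cV[R]_n),
    (forall i, 0 <= lam i) -> \sum_i lam i = 1 -> (forall i, is_prob (ps i)) ->
    \big[Num.min/H n (ps ord0)]_(i < r.+1) H n (ps i)
      <= H n (\sum_i lam i *: ps i).

Definition max_ext (H : entropy_fun) {y x : nat} (N : 'M[R]_(y, x)) : R :=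
  inf [set t : R | exists (k : nat) (q : 'cV[R]_k),
                     is_prob q /\ chmaj N q /\ t = H k q].

End Defs.

From HB Require Import structures.
From mathcomp Require Import all_boot all_order all_algebra.
From mathcomp Require Import mxtens.
From mathcomp Require Import boolp classical_sets reals.
Import Order.TTheory GRing.Theory Num.Theory.
Local Open Scope ring_scope.
Set Implicit Arguments. Unset Strict Implicit.

(* Routing every input to x shows N >- p_x, so the infimum is at most
   min_x H(p_x).  Conversely, if N >- q then, after padding, q = D (N (x) id) S
   is a convex combination, with the entries of S as weights, of the vectors
   D_z p_x; each D_z is doubly stochastic, so p_x majorizes D_z p_x and
   H(D_z p_x) >= H(p_x).  Quasiconcavity and Schur-concavity then give
   H(q) >= min_x H(p_x).  That a (sub)stochastic image is majorized is a
   bathtub inequality: for v >= 0 and weights c in [0, 1] of total at most j,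
   sum_l c_l v_l is at most the sum of the j largest entries of v. *)

Section UpperSets.
Variables (R : realDomainType) (T : finType).

Lemma exists_upper_set (f : T -> R) (B0 : {set T}) :
  exists2 B : {set T}, #|B| = #|B0| &
    forall a b, a \in B -> b \notin B -> f b <= f a.
Proof.
pose F (A : {set T}) := \sum_(t in A) f t.
have [B /eqP cardB Bmax] :=
  @arg_maxP _ _ _ B0 (fun A : {set T} => #|A| == #|B0|) F (eqxx _).
exists B => // a b aB bNB.
have card_swap : #|b |: (B :\ a)| == #|B0|.
  by rewrite cardsU1 in_setD1 (negbTE bNB) andbF /= -cardB (cardsD1 a B) aB.
have := Bmax _ card_swap.
rewrite /F big_setU1 /=; last by rewrite in_setD1 (negbTE bNB) andbF.
by rewrite [leRHS](big_setD1 _ aB) /= lerD2r.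
Qed.

Lemma weighted_sum_le_upper_set (f c : T -> R) (B : {set T}) :
  (forall t, 0 <= f t) -> (forall t, 0 <= c t <= 1) -> \sum_t c t <= #|B|%:R ->
  (forall a b, a \in B -> b \notin B -> f b <= f a) ->
  \sum_t c t * f t <= \sum_(t in B) f t.
Proof.
move=> f_ge0 c01 sum_c dom.
(* any theta between the values of f off B and those on B would do *)
pose theta := \big[Num.max/0]_(b | b \notin B) f b.
have theta_ge0 : 0 <= theta := bigmax_ge_id _ _ _ _.
have off_B : \sum_(t | t \notin B) c t * f t <= theta * \sum_(t | t \notin B) c t.
  rewrite mulr_sumr; apply: ler_sum => t tNB; rewrite mulrC.
  by apply: ler_wpM2r; [case/andP: (c01 t) | exact: le_bigmax_cond].
have on_B : theta * \sum_(t in B) (1 - c t) <= \sum_(t in B) (1 - c t) * f t.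
  rewrite mulr_sumr; apply: ler_sum => t tB; rewrite mulrC.
  apply: ler_wpM2l; first by case/andP: (c01 t); rewrite subr_ge0.
  by apply: bigmax_le => // b bNB; exact: dom.
have budget : \sum_(t | t \notin B) c t <= \sum_(t in B) (1 - c t).
  by rewrite sumrB sumr_const lerBrDl; move: sum_c; rewrite (bigID (mem B)).
have split_f : \sum_(t in B) f t =
    \sum_(t in B) c t * f t + \sum_(t in B) (1 - c t) * f t.
  by rewrite -big_split; apply: eq_bigr => t _ /=; rewrite -mulrDl addrC subrK mul1r.
rewrite (bigID (mem B)) split_f lerD2l.
by apply: le_trans off_B (le_trans _ on_B); exact: ler_wpM2l.
Qed.

End UpperSets.

Section Channels.
Variable R : realType.

Definition substochastic {a b} (W : 'M[R]_(a, b)) : Prop :=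
  [/\ forall i j, 0 <= W i j, forall i, \sum_j W i j <= 1 & forall j, \sum_i W i j <= 1].

Lemma doubly_stochastic_substochastic a b (D : 'M[R]_(a, b)) :
  doubly_stochastic D -> substochastic D.
Proof. by move=> [[D_ge0 D_col] D_row]; split=> // i; rewrite ?D_row ?D_col. Qed.

Lemma substochastic_mul a b c (A : 'M[R]_(a, b)) (B : 'M[R]_(b, c)) :
  substochastic A -> substochastic B -> substochastic (A *m B).
Proof.
move=> [A_ge0 A_row A_col] [B_ge0 B_row B_col]; split.
- by move=> i j; rewrite mxE sumr_ge0 // => k _; rewrite mulr_ge0.
- move=> i; under eq_bigr do rewrite mxE.
  rewrite exchange_big /=; under eq_bigr do rewrite -mulr_sumr.
  by apply: le_trans (A_row i); apply: ler_sum => k _; exact: ler_piMr.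
- move=> j; under eq_bigr do rewrite mxE.
  rewrite exchange_big /=; under eq_bigr do rewrite -mulr_suml.
  apply: le_trans (B_col j); apply: ler_sum => k _.
  by rewrite mulrC; exact: ler_piMr.
Qed.

Lemma is_channel_mul a b c (A : 'M[R]_(a, b)) (B : 'M[R]_(b, c)) :
  is_channel A -> is_channel B -> is_channel (A *m B).
Proof.
move=> [A_ge0 A_col] [B_ge0 B_col]; split.
  by move=> i j; rewrite mxE sumr_ge0 // => k _; rewrite mulr_ge0.
move=> j; under eq_bigr do rewrite mxE.
rewrite exchange_big /= -(B_col j); apply: eq_bigr => k _.
by rewrite -mulr_suml A_col mul1r.
Qed.

Lemma is_channel_tens m n p q (A : 'M[R]_(m, n)) (B : 'M[R]_(p, q)) :
  is_channel A -> is_channel B -> is_channel (A *t B).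
Proof.
move=> [A_ge0 A_col] [B_ge0 B_col]; split.
  by move=> i j; rewrite mxE mulr_ge0.
move=> j; under eq_bigr do rewrite mxE.
by rewrite -(mulr_sum (fun i => A i _) (fun i => B i _)) A_col B_col mulr1.
Qed.

Lemma is_prob_col a b (A : 'M[R]_(a, b)) x : is_channel A -> is_prob (col x A).
Proof.
move=> [A_ge0 A_col]; split=> [i j|j]; rewrite ?mxE //.
by under eq_bigr do rewrite mxE.
Qed.

Lemma sum_pid_mx_col m n r (j : 'I_n) :
  \sum_(i < m) (pid_mx r : 'M[R]_(m, n)) i j = ((j < r) && (j < m))%N%:R.
Proof.
under eq_bigr do rewrite mxE.
have [jm|mj] := ltnP j m; last first.
  rewrite andbF big1 // => i _; case: eqP => [ij|//].
  by move: (ltn_ord i); rewrite ij ltnNge mj.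
rewrite (bigD1 (Ordinal jm)) //= eqxx andbT big1 ?addr0 // => i ij.
by rewrite -(inj_eq val_inj) /= in ij; rewrite (negbTE ij).
Qed.

Lemma sum_pid_mx_row m n r (i : 'I_m) :
  \sum_(j < n) (pid_mx r : 'M[R]_(m, n)) i j = ((i < r) && (i < n))%N%:R.
Proof.
by rewrite -(sum_pid_mx_col n r i); apply: eq_bigr => j _; rewrite -tr_pid_mx mxE.
Qed.

Lemma substochastic_pid m n r : substochastic (pid_mx r : 'M[R]_(m, n)).
Proof.
split=> [i j|i|j]; first by rewrite mxE ler0n.
  by rewrite sum_pid_mx_row lern1 leq_b1.
by rewrite sum_pid_mx_col lern1 leq_b1.
Qed.

Lemma is_channel_pid m n : (n <= m)%N -> is_channel (pid_mx n : 'M[R]_(m, n)).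
Proof.
move=> nm; split=> [i j|j]; first by rewrite mxE ler0n.
by rewrite sum_pid_mx_col ltn_ord (leq_trans (ltn_ord j) nm).
Qed.

Lemma pad_pid a n k (c : 'M[R]_(n, k)) : pad a c = pid_mx n *m c.
Proof.
apply/matrixP => i j; rewrite !mxE.
case: insubP => [i' ilt vi|iNn].
  rewrite (bigD1 i') //= mxE vi eqxx ilt mul1r big1 ?addr0 // => l li'.
  rewrite mxE -vi; case: eqP => [e|_]; last by rewrite mul0r.
  by rewrite (val_inj (esym e)) eqxx in li'.
rewrite big1 // => l _; rewrite mxE; case: eqP => [il|]; last by rewrite mul0r.
by move: iNn; rewrite -[\val i]/(nat_of_ord i) il ltn_ord.
Qed.

Lemma mul_pid_mx_pad a b n k (c : 'M[R]_(n, k)) :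
  (n <= b)%N -> (pid_mx b : 'M[R]_(a, b)) *m pad b c = pad a c.
Proof. by move=> nb; rewrite !pad_pid mulmxA mul_pid_mx !(minn_idPr nb). Qed.

Lemma pad_pad a b n k (c : 'M[R]_(n, k)) : (n <= b)%N -> pad a (pad b c) = pad a c.
Proof. by move=> nb; rewrite [LHS]pad_pid mul_pid_mx_pad. Qed.

Lemma pad_id n k (c : 'M[R]_(n, k)) : pad n c = c.
Proof. by rewrite pad_pid pid_mx_1 mul1mx. Qed.

Lemma col_pad a n k (c : 'M[R]_(n, k)) x : col x (pad a c) = pad a (col x c).
Proof. by rewrite !pad_pid !colE mulmxA. Qed.

Lemma is_channel_pad a n k (c : 'M[R]_(n, k)) :
  (n <= a)%N -> is_channel c -> is_channel (pad a c).
Proof. by move=> na; rewrite pad_pid; apply: is_channel_mul (is_channel_pid na). Qed.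

Lemma tensmx1_pad a (c : 'cV[R]_a) : c *t (1%:M : 'M[R]_1) = pad (a * 1) c.
Proof.
apply/matrixP => i j; rewrite mxE [RHS]mxE.
have ia : (val i < a)%N by rewrite -[val i]divn1 (ltn_ord (mxtens_unindex i).1).
rewrite insubT /= !mxE.
set o1 := Ordinal (mxtens_index_proof2 i); set o2 := Ordinal (mxtens_index_proof2 j).
rewrite [o1]ord1 [o2]ord1 eqxx mulr1.
by congr (c _ _); apply: val_inj; rewrite /= divn1.
Qed.

Lemma col_tensmx m n p q (A : 'M[R]_(m, n)) (B : 'M[R]_(p, q)) x z :
  col (mxtens_index (x, z)) (A *t B) = col x A *t col z B.
Proof. by apply/matrixP => i j; rewrite !mxE mxtens_indexK. Qed.

Lemma mulmx_sum_col a b (A : 'M[R]_(a, b)) (s : 'cV[R]_b) :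
  A *m s = \sum_i s i 0 *: col i A.
Proof.
apply/matrixP => i j; rewrite mxE summxE [j]ord1; apply: eq_bigr => k _.
by rewrite !mxE mulrC.
Qed.

End Channels.

Section Majorization.
Variable R : realType.

Lemma sum_largest_ge0 K (v : 'cV[R]_K) j : 0 <= sum_largest v j.
Proof. exact: bigmax_ge_id. Qed.

Lemma sum_le_sum_largest K (v : 'cV[R]_K) (B : {set 'I_K}) :
  \sum_(i in B) v i 0 <= sum_largest v #|B|.
Proof. exact: (le_bigmax_cond _ (j := B)). Qed.

Lemma sum_largest_substochastic K (W : 'M[R]_K) (v : 'cV[R]_K) j :
  substochastic W -> (forall l, 0 <= v l 0) ->
  sum_largest (W *m v) j <= sum_largest v j.
Proof.
move=> [W_ge0 W_row W_col] v_ge0.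
apply: bigmax_le => [|A /eqP <-]; first exact: sum_largest_ge0.
have [B cardB B_upper] := exists_upper_set (fun l => v l 0) A.
rewrite -cardB; apply: le_trans (sum_le_sum_largest v B).
under eq_bigr do rewrite mxE.
rewrite exchange_big /=; under eq_bigr do rewrite -mulr_suml.
apply: weighted_sum_le_upper_set => // [l|].
  rewrite sumr_ge0 //=; apply: le_trans (W_col l).
  by rewrite [leRHS](bigID (mem A)) /= lerDl sumr_ge0.
rewrite cardB exchange_big /=; apply: le_trans (_ : \sum_(i in A) (1 : R) <= _).
  exact: ler_sum.
by rewrite sumr_const.
Qed.

Definition substoch_image {a b} (u : 'cV[R]_a) (v : 'cV[R]_b) : Prop :=
  exists2 W : 'M[R]_(a, b), substochastic W & u = W *m v.

Lemma substoch_image_mull a b c (W : 'M[R]_(a, b)) (u : 'cV[R]_b) (v : 'cV[R]_c) :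
  substochastic W -> substoch_image u v -> substoch_image (W *m u) v.
Proof.
by move=> sW [V sV ->]; exists (W *m V); [exact: substochastic_mul | rewrite mulmxA].
Qed.

Lemma substoch_image_pad a b (v : 'cV[R]_b) : substoch_image (pad a v) v.
Proof. by exists (pid_mx b); [exact: substochastic_pid | rewrite pad_pid]. Qed.

Lemma substoch_image_unpad a b (v : 'cV[R]_b) :
  (b <= a)%N -> substoch_image v (pad a v).
Proof.
move=> ba; exists (pid_mx a); first exact: substochastic_pid.
by rewrite mul_pid_mx_pad ?pad_id.
Qed.

Lemma majorizes_substoch_image n k (p : 'cV[R]_n) (q : 'cV[R]_k) :
  is_prob p -> substoch_image q p -> majorizes p q.
Proof.
move=> p_prob [W sW ->] j _; set M := maxn n k.
have [V sV ->] : substoch_image (pad M (W *m p)) (pad M p).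
  rewrite pad_pid mulmxA; apply: substoch_image_mull.
    by apply: substochastic_mul sW; exact: substochastic_pid.
  exact: substoch_image_unpad (leq_maxl n k).
apply: sum_largest_substochastic sV _ => l.
exact: (is_channel_pad (leq_maxl n k) p_prob).1.
Qed.

End Majorization.

Section Entropy.
Variable R : realType.

Lemma schur_concave_substoch_image (H : entropy_fun R) n k
    (p : 'cV[R]_n) (q : 'cV[R]_k) :
  schur_concave H -> is_prob p -> is_prob q -> substoch_image q p -> H n p <= H k q.
Proof.
by move=> hS p_prob q_prob qp; apply: hS => //; exact: majorizes_substoch_image.
Qed.

Lemma quasiconcave_ge (H : entropy_fun R) n p (lam : 'I_p -> R)
    (ps : 'I_p -> 'cV[R]_n) a :
  quasiconcave H -> (forall i, 0 <= lam i) -> \sum_i lam i = 1 ->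
  (forall i, is_prob (ps i)) -> (forall i, a <= H n (ps i)) ->
  a <= H n (\sum_i lam i *: ps i).
Proof.
case: p lam ps => [|r] lam ps hQ lam_ge0 lam_sum ps_prob a_le.
  by move: lam_sum; rewrite big_ord0 => /eqP; rewrite eq_sym oner_eq0.
by apply: le_trans (hQ _ _ lam ps lam_ge0 lam_sum ps_prob); exact: le_bigmin.
Qed.

Lemma chmaj_col ny m (N : 'M[R]_(ny, m)) x : chmaj N (col x N).
Proof.
set M := maxn ny ny.
exists 1%N, ((delta_mx x 0 : 'cV[R]_m) *t (1%:M : 'M[R]_1)), (pid_mx (M * 1)).
have M1 : (M * 1 <= M)%N by rewrite muln1.
have tens_delta : (1%:M : 'M[R]_M) *t (delta_mx 0 0 : 'cV[R]_1) = 1%:M.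
  apply/matrixP => i j.
  case: (mxtens_indexP i) => i1 i2; case: (mxtens_indexP j) => j1 j2.
  rewrite tensmxE !mxE [i2]ord1 [j2]ord1 !eqxx mulr1.
  by rewrite (can_eq (@mxtens_indexK _ _)) xpair_eqE eqxx andbT.
split; [|split; [|split]].
- have delta_chan : is_channel (delta_mx x 0 : 'cV[R]_m).
    split=> [i j|j]; first by rewrite mxE ler0n.
    rewrite [j]ord1 (bigD1 x) //= mxE !eqxx big1 ?addr0 // => i /negbTE ix.
    by rewrite mxE ix.
  have one_chan : is_channel (1%:M : 'M[R]_1).
    by split=> [i j|j]; rewrite ?big_ord1 [j]ord1 mxE ?ler0n.
  exact: is_channel_tens delta_chan one_chan.
- exact: is_channel_pid.
- move=> z; rewrite [z]ord1 tens_delta mulmx1; split; first exact: is_channel_pid.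
  by move=> i; rewrite sum_pid_mx_row muln1 ltn_ord.
- have select_x : pad M N *t (1%:M : 'M[R]_1) *m
      (delta_mx x 0 *t (1%:M : 'M[R]_1)) = pad M (col x N) *t 1%:M.
    by rewrite tensmx_mul mulmx1 -colE col_pad.
  rewrite -mulmxA select_x tensmx1_pad pad_pad ?leq_maxl // mul_pid_mx_pad //.
  by rewrite muln1 leq_maxl.
Qed.

Lemma chmaj_pad_convex_comb ny m (N : 'M[R]_(ny, m)) k (q : 'cV[R]_k) :
  is_channel N -> chmaj N q ->
  exists p (lam : 'I_p -> R) (ps : 'I_p -> 'cV[R]_(maxn ny k)),
    [/\ forall i, 0 <= lam i, \sum_i lam i = 1,
        pad (maxn ny k) q = \sum_i lam i *: ps i &
        forall i, is_prob (ps i) /\ exists x, substoch_image (ps i) (col x N)].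
Proof.
move=> N_chan [nz [S [D [S_chan [_ [D_ds ->]]]]]]; set M := maxn ny k.
exists (m * nz)%N, (fun i => S i 0), (fun i => col i (D *m (pad M N *t 1%:M))).
split=> [i||| i]; [exact: S_chan.1 | exact: S_chan.2 | exact: mulmx_sum_col |].
case: (mxtens_indexP i) => x z.
pose Dz := D *m ((1%:M : 'M[R]_M) *t (delta_mx z 0 : 'cV[R]_nz)).
have -> : col (mxtens_index (x, z)) (D *m (pad M N *t 1%:M)) =
    Dz *m pad (M * 1) (col x N).
  have Dz_tens : Dz *m (pad M (col x N) *t (1%:M : 'M[R]_1)) =
      D *m (pad M (col x N) *t delta_mx z 0).
    by rewrite -mulmxA tensmx_mul mul1mx mulmx1.
  rewrite -(pad_pad (M * 1) (col x N) (leq_maxl ny k)) -tensmx1_pad Dz_tens.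
  by rewrite colE -mulmxA -colE col_tensmx col1 col_pad.
split; last first.
  exists x; apply: substoch_image_mull; last exact: substoch_image_pad.
  exact: doubly_stochastic_substochastic (D_ds z).
apply: is_channel_mul; first exact: (D_ds z).1.
by apply: is_channel_pad; [rewrite muln1 leq_maxl | exact: is_prob_col].
Qed.

Lemma min_col_le_chmaj (H : entropy_fun R) ny m (N : 'M[R]_(ny, m.+1)) k
    (q : 'cV[R]_k) :
  schur_concave H -> quasiconcave H -> is_channel N -> is_prob q -> chmaj N q ->
  \big[Num.min/H ny (col ord0 N)]_(x < m.+1) H ny (col x N) <= H k q.
Proof.
move=> hS hQ N_chan q_prob Nq.
have [p [lam [ps [lam_ge0 lam_sum q_comb ps_prop]]]] :=
  chmaj_pad_convex_comb N_chan Nq.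
apply: (@le_trans _ _ (H _ (pad (maxn ny k) q))).
  rewrite q_comb; apply: quasiconcave_ge => // [i|i]; first exact: (ps_prop i).1.
  have [ps_prob [x psx]] := ps_prop i.
  apply: le_trans (bigmin_le _ x _) _.
  exact: schur_concave_substoch_image (is_prob_col x N_chan) ps_prob psx.
apply: schur_concave_substoch_image => //.
  exact: is_channel_pad (leq_maxr ny k) q_prob.
exact: substoch_image_unpad (leq_maxr ny k).
Qed.

End Entropy.

Unset Implicit Arguments.
Set Strict Implicit.

Theorem theorem19 (R : realType) (H : entropy_fun R)
  (hH : classical_entropy H) (hq : quasiconcave H)
  (m ny : nat) (N : 'M[R]_(ny, m.+1)) (hN : is_channel N) :
  max_ext H N = \big[Num.min/H ny (col ord0 N)]_(x < m.+1) H ny (col x N).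
Proof.
rewrite /max_ext; set hmin := \big[Num.min/_]_(x < m.+1) _; set S := (X in inf X).
have S_lb : lbound S hmin.
  by move=> _ [k [q [q_prob [Nq ->]]]]; exact: min_col_le_chmaj hH.1 hq hN q_prob Nq.
have S_col x : S (H ny (col x N)).
  by exists ny, (col x N); split; [exact: is_prob_col | split; [exact: chmaj_col |]].
apply/eqP; rewrite eq_le; apply/andP; split.
  by apply: le_bigmin => [|x _]; apply: ge_inf (S_col _); exists hmin.
by apply: lb_le_inf S_lb; exists (H ny (col ord0 N)).
Qed.
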